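(* Let $H$ be a Banach space and $S(t):H\to H$, $t\ge0$, a semigroup ($S(t+l)=S(t)\circ S(l)$, $S(0)=\mathrm{Id}$) which is dissipative and possesses a global attractor $\mathcal{A}$ in $H$. Assume that every trajectory $u(t)=S(t)u_0$ belongs to $C_{loc}(\mathbb{R}_+,H)$ and that the map $u_0\mapsto S(\cdot)u_0$ is continuous from $H$ to $C_{loc}(\mathbb{R}_+,H)$. Then every system $\{F_1,\dots,F_N\}$ of continuous functionals $F_i:H\to\mathbb{R}$ which is separating on the attractor $\mathcal{A}$ is asymptotically determining.
   Context: Dissipative means: there exist constants $C,\alpha>0$ and a monotone increasing function $Q$ such that $\|S(t)u_0\|_H\le Q(\|u_0\|_H)e^{-\alpha t}+C$ for all $u_0\in H$, $t\ge0$. A set $\mathcal{A}\subset H$ is a global attractor if it is compact, strictly invariant ($S(t)\mathcal{A}=\mathcal{A}$ for all $t\ge0$), and for every bounded $B\subset H$ and every neighbourhood $\mathcal{O}$ of $\mathcal{A}$ there is $T$ with $S(t)B\subset\mathcal{O}$ for $t\ge T$. A complete trajectory belonging to the attractor is a map $u:\mathbb{R}\to\mathcal{A}$ with $S(t)u(s)=u(t+s)$ for all $s\in\mathbb{R}$, $t\ge0$. A system $\{F_1,\dots,F_N\}$ is separating on $\mathcal{A}$ if for any two complete trajectories $u,v$ belonging to $\mathcal{A}$, $F_i(u(t))=F_i(v(t))$ for all $t\in\mathbb{R}$ and all $i$ implies $u\equiv v$. It is asymptotically determining if for any two trajectories $u(t)=S(t)u_0$, $v(t)=S(t)v_0$,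 $\lim_{t\to\infty}(F_i(u(t))-F_i(v(t)))=0$ for all $i$ implies $\lim_{t\to\infty}\|u(t)-v(t)\|_H=0$. *)

From HB Require Import structures.
From mathcomp Require Import all_boot all_order all_algebra.
From mathcomp Require Import all_classical all_reals all_analysis.
Set Implicit Arguments. Unset Strict Implicit. Unset Printing Implicit Defensive.
Import Order.TTheory GRing.Theory Num.Theory.
Import numFieldNormedType.Exports.
Local Open Scope classical_set_scope.
Local Open Scope ring_scope.

Section Defs.
Context {R : realType} {H : completeNormedModType R}.

Definition is_semigroup (S : R -> H -> H) : Prop :=
  (forall u, S 0 u = u) /\
  (forall t l, 0 <= t -> 0 <= l -> forall u, S (t + l) u = S t (S l u)).

Definition dissipative (S : R -> H -> H) : Prop :=
  exists (C alpha : R) (Q : R -> R),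
    0 < C /\ 0 < alpha /\ (forall a b, a <= b -> Q a <= Q b) /\
    forall u0 t, 0 <= t -> `|S t u0| <= Q `|u0| * expR (- (alpha * t)) + C.

Definition bounded_subset (B : set H) : Prop :=
  exists M : R, forall x, B x -> `|x| <= M.

Definition set_nbhs (A O : set H) : Prop :=
  exists U : set H, open U /\ A `<=` U /\ U `<=` O.

Definition global_attractor (S : R -> H -> H) (A : set H) : Prop :=
  compact A /\
  (forall t, 0 <= t -> S t @` A = A) /\
  (forall B O, bounded_subset B -> set_nbhs A O ->
     exists T : R, forall t, T <= t -> S t @` B `<=` O).

Definition complete_traj (S : R -> H -> H) (A : set H) (u : R -> H) : Prop :=
  (forall s, A (u s)) /\ (forall s t, 0 <= t -> S t (u s) = u (t + s)).

Definition trajectories_continuous (S : R -> H -> H) : Prop :=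
  forall u0, {within [set t : R | 0 <= t], continuous (fun t => S t u0)}.

(* u0 |-> S(.)u0 continuous H -> C_loc(R_+,H): topology of uniform
   convergence on compact subsets of R_+, i.e. on every [0,T] *)
Definition Cloc_continuous (S : R -> H -> H) : Prop :=
  forall u0 (T eps : R), 0 <= T -> 0 < eps ->
    exists2 delta : R, 0 < delta &
      forall v0, `|u0 - v0| < delta ->
        forall t, 0 <= t <= T -> `|S t u0 - S t v0| < eps.

Definition separating (S : R -> H -> H) (A : set H) (N : nat)
    (F : 'I_N -> H -> R) : Prop :=
  forall u v, complete_traj S A u -> complete_traj S A v ->
    (forall t i, F i (u t) = F i (v t)) -> u = v.

Definition asymptotically_determining (S : R -> H -> H) (N : nat)
    (F : 'I_N -> H -> R) : Prop :=
  forall u0 v0,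
    (forall i, (F i (S t u0) - F i (S t v0)) @[t --> +oo] --> (0 : R)) ->
    `|S t u0 - S t v0| @[t --> +oo] --> (0 : R).

End Defs.

From Pilot Require Import Defs.
From HB Require Import structures.
From mathcomp Require Import all_boot all_order all_algebra.
From mathcomp Require Import all_classical all_reals all_analysis.
Import Order.TTheory GRing.Theory Num.Theory.
Import numFieldNormedType.Exports.
Local Open Scope classical_set_scope.
Local Open Scope ring_scope.

(* It suffices that |S(t)u0 - S(t)v0| tends to 0 along every ultrafilter U
   on the times finer than t --> +oo.  Along U, for every shift s, the point
   S(t+s)u0 ends up in every neighbourhood of the compact attractor, hence
   converges to some u(s) in A; likewise S(t+s)v0 converges to v(s).  The
   semigroup law and the continuity of each S(tau) make u and v complete
   trajectories in A, the continuity of the F_i gives F_i(u(s)) = F_i(v(s)),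
   so u = v by separation and S(t)u0 - S(t)v0 tends to u(0) - v(0) = 0 along
   U.  The ultrafilter replaces the diagonal extraction of subsequences. *)

Lemma cvg_of_ultra (I : Type) (T : topologicalType) (F : set_system I)
    (f : I -> T) (p : T) : Filter F ->
  (forall U, UltraFilter U -> F `<=` U -> f @ U --> p) -> f @ F --> p.
Proof.
move=> FF fUp B pB; apply: contrapT => nFB.
pose G := filter_from F (fun P => P `&` ~` (f @^-1` B)).
have GG : ProperFilter G.
  apply: filter_from_proper.
    apply: filter_from_filter; first by exists setT; exact: filterT.
    move=> P Q FP FQ; exists (P `&` Q); first exact: filterI.
    by move=> x [[Px Qx] nBx].
  move=> P FP; apply: contrapT => nP; apply: nFB.
  apply: (@filterS _ F _ P) => // x Px.
  by apply: contrapT => nBx; apply: nP; exists x.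
have [U [UU GU]] := ultraFilterLemma GG.
have FU : F `<=` U by move=> P FP; apply: GU; exists P => // x [].
have UnB : U (~` (f @^-1` B)).
  by apply: GU; exists setT; [exact: filterT | move=> x []].
have UB : U (f @^-1` B) by exact: fUp U UU FU B pB.
by have [x [Bx nBx]] := filter_ex (filterI UB UnB).
Qed.

Lemma ultra_cluster_cvg (I : Type) (T : topologicalType) (U : set_system I)
    (f : I -> T) (p : T) :
  UltraFilter U -> cluster (f @ U) p -> f @ U --> p.
Proof.
move=> UU cp B pB.
case: (in_ultra_setVsetC (f @^-1` B) UU) => // UnB.
by have [x [nBx Bx]] := cp (~` B) B UnB pB.
Qed.

Lemma compact_enlargement_cluster (R : realType) (T : pseudoMetricType R)
    (K : set T) (G : set_system T) :
  compact K -> ProperFilter G ->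
  (forall e : R, 0 < e -> G (\bigcup_(k in K) ball k e)) ->
  exists2 p, K p & cluster G p.
Proof.
move=> cK GG GK.
(* The trace on K of the e-enlargements of the G-sets is a proper filter
   containing K; any of its cluster points is one of G. *)
pose D := [set Pe : set T * R | G Pe.1 /\ 0 < Pe.2].
pose B Pe := [set k | K k /\ exists2 y, Pe.1 y & ball k Pe.2 y].
have BB : ProperFilter (filter_from D B).
  apply: filter_from_proper.
    apply: filter_from_filter.
      by exists (setT, 1); split; [exact: filterT | exact: ltr01].
    move=> [P1 e1] [P2 e2] [/= GP1 e1p] [/= GP2 e2p].
    exists (P1 `&` P2, Order.min e1 e2).
      by split => /=; [exact: filterI | rewrite lt_min e1p e2p].
    move=> k [Kk [y [P1y P2y] bky]]; split; split => //; exists y => //;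
      apply: le_ball bky; rewrite ge_min lexx ?orbT //.
  move=> [P e] [/= GP ep].
  have [y [Py [k Kk bky]]] := filter_ex (filterI GP (GK e ep)).
  by exists k; split => //; exists y.
have BK : filter_from D B K.
  by exists (setT, 1); [split; [exact: filterT | exact: ltr01] | move=> k []].
have [p [Kp cp]] := cK _ BB BK.
exists p => // P Q GP /nbhs_ballP [r r0 brQ].
have r2 : 0 < r / 2 by rewrite divr_gt0.
have [k [[Kk [y Py bky]] bpk]] := cp (B (P, r / 2)) (ball p (r / 2))
  (ex_intro2 _ _ (P, r / 2) (conj GP r2) (fun x h => h)) (nbhsx_ballx p _ r2).
exists y; split => //; apply: brQ.
by rewrite [r]splitr; exact: ball_triangle bpk bky.
Qed.

Lemma cvgy_shift {R : realFieldType} {U : set_system R} (s : R) :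
  U --> +oo -> (t + s) @[t --> U] --> +oo.
Proof. by move=> Uy; apply: cvg_trans (cvg_app _ Uy) (cvg_addrr s). Qed.

Lemma Cloc_continuous_S (R : realType) (H : completeNormedModType R)
    (S : R -> H -> H) (tau : R) :
  Cloc_continuous S -> 0 <= tau -> continuous (S tau).
Proof.
move=> SC tau0 x; apply/cvgrPdist_lt => e e0.
have [d d0 Sd] := SC x tau e tau0 e0.
apply/nbhs_ballP; exists d => // y; rewrite -ball_normE /= => xy.
by apply: Sd; rewrite ?tau0 ?lexx.
Qed.

Section attractor_limits.
Context {R : realType} {H : completeNormedModType R}.
Context {S : R -> H -> H} {A : set H}.
Hypothesis compactA : compact A.
Hypothesis attractsA : forall B O, bounded_subset B -> Defs.set_nbhs A O ->
  exists T : R, forall t, T <= t -> S t @` B `<=` O.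

Lemma attractor_ultra_limit {I : Type} {U : set_system I} {tau : I -> R}
    (w0 : H) : UltraFilter U -> tau @ U --> +oo ->
  exists2 p, A p & S (tau i) w0 @[i --> U] --> p.
Proof.
move=> UU tauy.
suff [p Ap /ultra_cluster_cvg cvp] :
    exists2 p, A p & cluster (S (tau i) w0 @[i --> U]) p.
  by exists p => //; exact: cvp.
apply: (@compact_enlargement_cluster R H A _ compactA) => e e0.
have [T attrT] : exists T : R, forall t, T <= t ->
    S t @` [set w0] `<=` \bigcup_(k in A) ball k e.
  apply: attractsA; first by exists `|w0| => x ->.
  exists (\bigcup_(k in A) ball k e); split; last split => //.
  - by apply: bigcup_open => k _; exact: ball_open.
  - by move=> k Ak; exists k => //; exact: ballxx.
have tauT : \forall i \near U, T <= tau i.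
  exact: tauy _ (nbhs_pinfty_ge (num_real T)).
apply: filterS tauT => i Ti.
by apply: attrT Ti _ _; exists w0.
Qed.

Hypothesis S_comp :
  forall t l, 0 <= t -> 0 <= l -> forall u, S (t + l) u = S t (S l u).
Hypothesis S_continuous : forall tau, 0 <= tau -> continuous (S tau).

Lemma ultra_limit_complete_traj {U : set_system R} (w0 : H) :
  UltraFilter U -> U --> +oo ->
  exists2 w : R -> H, complete_traj S A w &
    forall s, S (t + s) w0 @[t --> U] --> w s.
Proof.
move=> UU Uy.
have /choice [w ws] : forall s, exists p, A p /\ S (t + s) w0 @[t --> U] --> p.
  move=> s; have [p Ap cvp] := attractor_ultra_limit w0 UU (cvgy_shift s Uy).
  by exists p.
exists w => [|s]; last by case: (ws s).
split => [s|s tau tau0]; first by case: (ws s).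
have lim_tau : (S tau \o (fun t => S (t + s) w0)) @ U --> S tau (w s).
  exact: cvg_comp (ws s).2 (S_continuous _ tau0 (w s)).
have lim_shift : (S tau \o (fun t => S (t + s) w0)) @ U --> w (tau + s).
  apply: cvg_trans (ws (tau + s)).2; apply: near_eq_cvg.
  have ts0 : \forall t \near U, 0 <= t + s.
    exact: cvgy_shift s Uy _ (nbhs_pinfty_ge (num_real 0)).
  apply: filterS ts0 => t /= ts.
  by rewrite -S_comp // addrCA addrA.
exact: cvg_unique _ lim_tau lim_shift.
Qed.

End attractor_limits.

Theorem proposition2p3 (R : realType) (H : completeNormedModType R)
    (S : R -> H -> H) (A : set H) :
  is_semigroup S -> dissipative S -> global_attractor S A ->
  trajectories_continuous S -> Cloc_continuous S ->
  forall (N : nat) (F : 'I_N -> H -> R),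
    (forall i, continuous (F i)) ->
    separating S A F -> asymptotically_determining S F.
Proof.
move=> [_ S_comp] _ [cA [_ attrA]] _ SC N F Fc sep u0 v0 hF.
have S_cont tau := @Cloc_continuous_S R H S tau SC.
apply: cvg_of_ultra => U UU Uy.
have limit_traj := ultra_limit_complete_traj cA attrA S_comp S_cont _ UU Uy.
have [u u_traj ulim] := limit_traj u0.
have [v v_traj vlim] := limit_traj v0.
have Fuv t i : F i (u t) = F i (v t).
  have dF_lim : F i (S (r + t) u0) - F i (S (r + t) v0) @[r --> U] -->
      F i (u t) - F i (v t).
    by apply: cvgB; [exact: cvg_comp (ulim t) (Fc i _)
                    | exact: cvg_comp (vlim t) (Fc i _)].
  have dF0 : F i (S (r + t) u0) - F i (S (r + t) v0) @[r --> U] --> 0.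
    exact: cvg_comp (cvgy_shift t Uy) (hF i).
  exact/subr0_eq/(cvg_unique _ dF_lim dF0).
have uv := sep u v u_traj v_traj Fuv.
have diff0 : S t u0 - S t v0 @[t --> U] --> (0 : H).
  rewrite -(subrr (u 0)) {2}uv.
  by apply: cvgB; [move: (ulim 0) | move: (vlim 0)];
    under eq_fun do rewrite addr0.
by rewrite -(@normr0 _ H); exact: cvg_norm diff0.
Qed.
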